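(* Let $K$ be a finite field of characteristic $p$, let $d$ be an integer with $\gcd(d,|K|-1)=1$, and let $\sigma\in\mathrm{Gal}(\mathbb{Q}(\zeta_p)/\mathbb{Q})$ be such that $\sigma$ does not fix every value $W_{K,d}(a)$, $a\in K^\times$. Then $$\sum_{a\in K^\times}W_{K,d}(a)\,\sigma\big(W_{K,d}(a)\big)=0.$$
   Context: $\zeta_p$ is a primitive $p$th root of unity over $\mathbb{Q}$. $\psi_K(x)=\exp(2\pi i\,\mathrm{Tr}_{K/\mathbb{F}_p}(x)/p)$ and $W_{K,d}(a)=\sum_{x\in K}\psi_K(x^d+ax)\in\mathbb{Q}(\zeta_p)$. *)

From HB Require Import structures.
From mathcomp Require Import all_boot all_order all_algebra all_field.
Set Implicit Arguments. Unset Strict Implicit. Unset Printing Implicit Defensive.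
Import Order.TTheory GRing.Theory Num.Theory.
Local Open Scope ring_scope.

Definition abs_trace (K : finFieldType) (p : nat) (x : K) : K :=
  \sum_(i < logn p #|K|) x ^+ (p ^ i).

(* The residue k in {0,..,p-1} with k%:R = Tr(x) in K (Tr(x) lies in F_p). *)
Definition trace_nat (K : finFieldType) (p : nat) (x : K) : nat :=
  nat_of_ord (odflt (@ord0 p.-1)
    [pick k : 'I_p.-1.+1 | (k%:R : K) == abs_trace p x]).

(* Canonical additive character psi_K(x) = zeta^(Tr x), zeta a primitive
   p-th root of unity in the algebraic complex numbers. *)
Definition psiK (K : finFieldType) (p : nat) (zeta : algC) (x : K) : algC :=
  zeta ^+ trace_nat p x.

Definition WeilSum (K : finFieldType) (p : nat) (zeta : algC) (d : int) (a : K)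
  : algC :=
  \sum_(x : K) psiK p zeta (x ^ d + a * x).

From HB Require Import structures.
From mathcomp Require Import all_boot all_order all_algebra all_field.
From mathcomp Require Import ring.
Import Order.TTheory GRing.Theory Num.Theory.
Local Open Scope ring_scope.
Set Implicit Arguments. Unset Strict Implicit.

(* Write sigma zeta = zeta^e and E = e%:R, a nonzero element of the prime
   field of K.  Then sigma(W(a)) is the Weil sum of y |-> E (y^d + a y), and
   orthogonality of the characters a |-> psi(a t) collapses
   sum_a W(a) sigma(W(a)) to |K| sum_y psi((-E y)^d + E y^d).
   If E^d = E, the substitution y -> y / E shows that sigma fixes every W(a).
   Otherwise E <> 1, so p and |K| are odd and gcd(d, |K| - 1) = 1 forces d odd;
   the sum becomes |K| sum_y psi((E - E^d) y^d), which vanishes because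
   y |-> y^d permutes K.  For the same reason W(0) = sum_x psi(x^d) = 0. *)

Lemma natr_eq_mod_pchar (R : nzRingType) (p a b : nat) : p \in [pchar R] ->
  (a%:R : R) = b%:R -> a = b %[mod p].
Proof.
move=> pcharR; wlog ab : a b / (a <= b)%N => [hwlog|].
  by case: (leqP a b) => [|/ltnW] ab eq_ab; last symmetry; apply: hwlog.
move=> eq_ab; apply/eqP; rewrite eq_sym eqn_mod_dvd //.
by rewrite (dvdn_pcharf pcharR) natrB // eq_ab subrr.
Qed.

Lemma pchar_odd (R : nzRingType) (p e : nat) : p \in [pchar R] ->
  (e%:R : R) != 0 -> (e%:R : R) != 1 -> odd p.
Proof.
move=> pcharR; case: (even_prime (pcharf_prime pcharR)) => [p2|//].
by rewrite -(GRing.natr_mod_pchar pcharR e) p2 modn2; case: (odd e); rewrite eqxx.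
Qed.

Lemma pFrobenius_fixed_natr (R : idomainType) (p : nat) (x : R) :
  p \in [pchar R] -> x ^+ p = x -> exists2 k, (k < p)%N & k%:R = x.
Proof.
move=> pcharR xpx; have p_gt1 := prime_gt1 (pcharf_prime pcharR).
have [|x_notin] := boolP (x \in [seq (k%:R : R) | k <- iota 0 p]).
  by case/mapP=> k; rewrite mem_iota add0n => /andP[_ kp] ->; exists k.
pose P : {poly R} := 'X^p - 'X.
have sizeP : size P = p.+1.
  by rewrite size_polyDl ?size_polyXn // size_polyN size_polyX ltnS.
have rootP y : y ^+ p = y -> root P y by rewrite rootE !hornerE => ->; rewrite subrr.
suff : (size (x :: [seq (k%:R : R) | k <- iota 0 p]) < size P)%N.
  by rewrite sizeP /= size_map size_iota ltnn.
apply: max_poly_roots; first by rewrite -size_poly_eq0 sizeP.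
  rewrite /= rootP //=; apply/allP=> _ /mapP[k _ ->].
  by rewrite rootP // -pFrobenius_autE rmorph_nat.
rewrite /= x_notin map_inj_in_uniq ?iota_uniq //.
move=> i j; rewrite !mem_iota !add0n => /andP[_ ip] /andP[_ jp].
by move/(natr_eq_mod_pchar pcharR); rewrite !modn_small.
Qed.

Section AbsoluteTrace.
Variables (K : finFieldType) (p : nat).
Hypothesis pcharK : p \in [pchar K].
Local Notation Tr := (abs_trace p).
Local Notation n := (logn p #|K|).

Let p_prime : prime p := pcharf_prime pcharK.

Lemma logn_card_gt0 : (0 < n)%N.
Proof.
by move: (finNzRing_gt1 K); rewrite {1}(card_pprimeChar pcharK); case: n.
Qed.

Lemma abs_traceD (x y : K) : Tr (x + y) = Tr x + Tr y.
Proof.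
rewrite /abs_trace -big_split; apply: eq_bigr => i _; apply: exprDn_pchar.
by rewrite pnatX (pnatE _ p_prime) pcharK.
Qed.

Lemma abs_trace0 : Tr (0 : K) = 0.
Proof. by apply: (addrI (Tr 0)); rewrite -abs_traceD !addr0. Qed.

Lemma abs_traceMn (x : K) k : Tr (x *+ k) = Tr x *+ k.
Proof. by elim: k => [|k IHk]; rewrite ?mulr0n ?abs_trace0 // !mulrS abs_traceD IHk. Qed.

Lemma abs_trace_pFrobenius (x : K) : Tr x ^+ p = Tr x.
Proof.
rewrite /abs_trace -pFrobenius_autE rmorph_sum /=.
have := card_pprimeChar pcharK; move: logn_card_gt0; case: n => // m _ cardK.
rewrite big_ord_recr big_ord_recl /= addrC; congr (_ + _).
  by rewrite pFrobenius_autE -exprM -expnSr -cardK expf_card expn0 expr1.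
by apply: eq_bigr => i _; rewrite pFrobenius_autE -exprM -expnSr.
Qed.

Lemma trace_natE (x : K) : ((trace_nat p x)%:R : K) = Tr x.
Proof.
rewrite /trace_nat; case: pickP => [k /eqP //|no_k]; exfalso.
have [k kp kTr] := pFrobenius_fixed_natr pcharK (abs_trace_pFrobenius x).
have kp' : (k < p.-1.+1)%N by rewrite prednK // prime_gt0.
by have := no_k (Ordinal kp'); rewrite /= kTr eqxx.
Qed.

(* Tr is given by a polynomial of degree p^(n-1) < |K|, so it has a non-root. *)
Lemma abs_trace_neq0 : exists x : K, Tr x != 0.
Proof.
have [x0 Trx0|Tr_eq0] := pickP (fun x : K => Tr x != 0); first by exists x0.
have := card_pprimeChar pcharK; move: logn_card_gt0; case: n => // m _ cardK.
have sizeP k : size (\sum_(i < k.+1) 'X^(p ^ i) : {poly K}) = (p ^ k).+1.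
  elim: k => [|k IHk]; first by rewrite big_ord1 size_polyXn.
  rewrite big_ord_recr /= addrC size_polyDl ?size_polyXn // IHk ltnS ltn_exp2l //.
  exact: prime_gt1.
pose P : {poly K} := \sum_(i < m.+1) 'X^(p ^ i).
suff : (size (enum K) < size P)%N.
  by rewrite sizeP -cardE cardK ltnS leqNgt ltn_exp2l ?ltnSn ?prime_gt1.
apply: max_poly_roots; rewrite ?enum_uniq // -?size_poly_eq0 ?sizeP //.
apply/allP => y _; move/negbFE/eqP: (Tr_eq0 y).
rewrite /abs_trace cardK pfactorK // => Try0.
by rewrite rootE horner_sum -[X in _ == X]Try0; under eq_bigr do rewrite hornerXn.
Qed.

End AbsoluteTrace.

Section AdditiveCharacter.
Variables (K : finFieldType) (p : nat) (zeta : algC).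
Hypotheses (pcharK : p \in [pchar K]) (zeta_prim : p.-primitive_root zeta).
Local Notation Tr := (abs_trace p).
Local Notation psi := (psiK p zeta).

Lemma psiK_natr (x : K) k : (k%:R : K) = Tr x -> psi x = zeta ^+ k.
Proof.
move=> kTr; apply/eqP; rewrite /psiK (eq_prim_root_expr zeta_prim).
by apply/eqP/(natr_eq_mod_pchar pcharK); rewrite (trace_natE pcharK) kTr.
Qed.

Lemma psiKD (x y : K) : psi (x + y) = psi x * psi y.
Proof.
rewrite {2 3}/psiK -exprD; apply: psiK_natr.
by rewrite natrD !(trace_natE pcharK) (abs_traceD pcharK).
Qed.

Lemma psiK0 : psi (0 : K) = 1.
Proof. by rewrite (@psiK_natr 0 0) ?expr0 // (abs_trace0 pcharK). Qed.

Lemma rmorph_psiK (sigma : {rmorphism algC -> algC}) (e : nat) (x : K) :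
  sigma zeta = zeta ^+ e -> sigma (psi x) = psi (e%:R * x).
Proof.
move=> sigma_zeta; rewrite {1}/psiK rmorphXn sigma_zeta -exprM; symmetry.
by apply: psiK_natr; rewrite natrM (trace_natE pcharK) !mulr_natl (abs_traceMn pcharK).
Qed.

(* Translating by some x0 with psi x0 != 1 multiplies the sum by psi x0. *)
Lemma sum_psiK : \sum_(x : K) psi x = 0.
Proof.
have [x0 Trx0] := abs_trace_neq0 pcharK.
have psix0_neq1 : psi x0 != 1.
  rewrite /psiK -(expr0 zeta) (eq_prim_root_expr zeta_prim) mod0n.
  by apply: contra Trx0 => p_dvd; rewrite -(trace_natE pcharK) -(dvdn_pcharf pcharK).
have : psi x0 * \sum_(x : K) psi x = \sum_(x : K) psi x.
  rewrite [RHS](reindex_inj (addrI x0)) mulr_sumr /=.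
  by apply: eq_bigr => x _; rewrite psiKD.
move/eqP; rewrite -subr_eq0 -{2}[\sum_x _]mul1r -mulrBl mulf_eq0 subr_eq0.
by rewrite (negbTE psix0_neq1) => /eqP.
Qed.

Lemma sum_psiKM (c : K) :
  \sum_(x : K) psi (c * x) = if c == 0 then #|K|%:R else 0.
Proof.
have [->|c_neq0] := eqVneq c 0.
  by under eq_bigr do rewrite mul0r psiK0; rewrite sumr_const.
by rewrite -[RHS]sum_psiK [in RHS](reindex_inj (mulfI c_neq0)).
Qed.

Lemma sum_psiK_mul_sum (f g : K -> K) (c : K) :
  \sum_(a : K) (\sum_(x : K) psi (f x + a * x)) * (\sum_(y : K) psi (g y + a * (c * y)))
  = #|K|%:R * \sum_(y : K) psi (f (- (c * y)) + g y).
Proof.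
transitivity (\sum_(a : K) \sum_(x : K) \sum_(y : K)
    psi (f x + g y) * psi ((x + c * y) * a)).
  apply: eq_bigr => a _; rewrite mulr_suml; apply: eq_bigr => x _.
  by rewrite mulr_sumr; apply: eq_bigr => y _; rewrite -!psiKD; congr psi; ring.
rewrite exchange_big /=; under eq_bigr do rewrite exchange_big /=.
under eq_bigr do under eq_bigr do rewrite -mulr_sumr sum_psiKM.
rewrite exchange_big mulr_sumr; apply: eq_bigr => y _ /=.
rewrite (bigD1 (- (c * y))) //= addNr eqxx mulrC big1 ?addr0 //.
by move=> x x_neq; rewrite addr_eq0 (negbTE x_neq) mulr0.
Qed.

End AdditiveCharacter.

Lemma expf_inj_coprime (K : finFieldType) (m : nat) :
  coprime m #|K|.-1 -> (0 < m)%N -> injective (fun x : K => x ^+ m).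
Proof.
move=> m_coprime m_gt0; have [[u v] /= bezout] := coprimeP _ m_gt0 m_coprime.
have exp_mu : (m * u = 1 + v * #|K|.-1)%N.
  by rewrite mulnC -bezout subnK // ltnW // -subn_gt0 bezout.
have expfS_card_pred (x : K) k : x ^+ (1 + k * #|K|.-1) = x.
  elim: k => [|k IHk]; first by rewrite mul0n addn0 expr1.
  rewrite mulSn addnCA exprD IHk -exprSr prednK ?expf_card //.
  exact: ltnW (finNzRing_gt1 K).
by move=> x y /= /(congr1 (fun z => z ^+ u)); rewrite -!exprM exp_mu !expfS_card_pred.
Qed.

Lemma expfz_inj_coprime (K : finFieldType) (d : int) :
  coprime `|d|%N #|K|.-1 -> (0 < `|d|)%N -> injective (fun x : K => x ^ d).
Proof.
case: d => m /= m_coprime m_gt0; first exact: expf_inj_coprime.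
by move=> x y /invr_inj; apply: expf_inj_coprime.
Qed.

Lemma exprNz_odd (R : unitRingType) (d : int) (z : R) :
  odd `|d|%N -> (- z) ^ d = - (z ^ d).
Proof.
rewrite expNrz; case: d => m /= m_odd.
  by rewrite -exprnP -signr_odd m_odd expr1 mulN1r.
by rewrite NegzE -!exprnN -signr_odd /= m_odd expr1 invrN1 mulN1r.
Qed.

Lemma odd_coprime_predn (m q : nat) : odd q -> coprime m q.-1 -> odd m.
Proof.
case: q => //= q q_even m_coprime; rewrite -coprimen2.
by apply: coprime_dvdr m_coprime; rewrite dvdn2.
Qed.

Lemma rmorph_prim_root_exp (F : fieldType) (sigma : {rmorphism F -> F})
    (p : nat) (zeta : F) : prime p -> p.-primitive_root zeta ->
  exists2 e : nat, ~~ (p %| e)%N & sigma zeta = zeta ^+ e.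
Proof.
move=> p_prime zeta_prim.
have /(prim_rootP zeta_prim)[e sigma_zeta] : sigma zeta ^+ p = 1.
  by rewrite -rmorphXn prim_expr_order // rmorph1.
have e_gt0 : (0 < e)%N.
  rewrite lt0n; apply/eqP => e0; move: sigma_zeta; rewrite e0 expr0.
  move/eqP; rewrite fmorph_eq1 => /eqP zeta1.
  have := prim_order_dvd zeta_prim 1; rewrite expr1 zeta1 eqxx dvdn1.
  by move=> /eqP p1; rewrite p1 in p_prime.
by exists e => //; apply: contra (dvdn_leq e_gt0) _; rewrite -ltnNge.
Qed.

Section WeilSums.
Variables (K : finFieldType) (p : nat) (zeta : algC) (d : int).
Hypotheses (pcharK : p \in [pchar K]) (zeta_prim : p.-primitive_root zeta).
Local Notation psi := (psiK p zeta).
Local Notation W := (WeilSum p zeta d).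

Lemma WeilSum0 : injective (fun x : K => x ^ d) -> W (0 : K) = 0.
Proof.
move=> expd_inj; rewrite -(sum_psiK pcharK zeta_prim) (reindex_inj expd_inj) /=.
by apply: eq_bigr => x _; rewrite mul0r addr0.
Qed.

Lemma rmorph_WeilSum (sigma : {rmorphism algC -> algC}) (e : nat) (a : K) :
  sigma zeta = zeta ^+ e ->
  sigma (W a) = \sum_(y : K) psi (e%:R * (y ^ d + a * y)).
Proof.
move=> sigma_zeta; rewrite rmorph_sum; apply: eq_bigr => y _.
exact: rmorph_psiK.
Qed.

Lemma WeilSum_scale_fixed (E a : K) : E != 0 -> E ^ d = E ->
  \sum_(y : K) psi (E * (y ^ d + a * y)) = W a.
Proof.
move=> E_neq0 EdE; rewrite /WeilSum (reindex_inj (mulfI (invr_neq0 E_neq0))) /=.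
apply: eq_bigr => y _; congr psi; rewrite expfzMl -expfV EdE; field.
by rewrite E_neq0.
Qed.

Lemma sum_WeilSum_scale (E : K) : odd `|d|%N ->
  injective (fun x : K => x ^ d) -> E ^ d != E ->
  \sum_(a : K) W a * \sum_(y : K) psi (E * (y ^ d + a * y)) = 0.
Proof.
move=> d_odd expd_inj EdE.
under eq_bigr do under [X in _ * X]eq_bigr do rewrite mulrDr mulrCA.
rewrite (sum_psiK_mul_sum pcharK zeta_prim (fun x => x ^ d)).
under eq_bigr do rewrite exprNz_odd // expfzMl -mulNr -mulrDl.
have -> : \sum_(y : K) psi ((- E ^ d + E) * y ^ d) = \sum_(z : K) psi ((- E ^ d + E) * z).
  by rewrite [RHS](reindex_inj expd_inj).
by rewrite (sum_psiKM pcharK zeta_prim) addrC subr_eq0 eq_sym (negbTE EdE) mulr0.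
Qed.

End WeilSums.

Unset Implicit Arguments.

Theorem corollary5p7 (K : finFieldType) (p : nat) (hp : p \in [pchar K])
  (zeta : algC) (hzeta : p.-primitive_root zeta)
  (d : int) (hd : coprime `|d|%N #|K|.-1)
  (sigma : {rmorphism algC -> algC})
  (hsigma : exists a : K, a != 0 /\ sigma (WeilSum p zeta d a) != WeilSum p zeta d a) :
  \sum_(a : K | a != 0) WeilSum p zeta d a * sigma (WeilSum p zeta d a) = 0.
Proof.
have [e p_ndvd_e sigma_zeta] := rmorph_prim_root_exp sigma (pcharf_prime hp) hzeta.
pose E : K := e%:R.
have E_neq0 : E != 0 by rewrite -(dvdn_pcharf hp).
have [EdE|EdE] := eqVneq (E ^ d) E.
  have [a [_]] := hsigma.
  by rewrite (rmorph_WeilSum d hp hzeta _ sigma_zeta) WeilSum_scale_fixed ?eqxx.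
have E_neq1 : E != 1 by apply: contraNneq EdE => ->; rewrite exp1rz.
have p_odd := pchar_odd hp E_neq0 E_neq1.
have card_odd : odd #|K|.
  by rewrite (card_pprimeChar hp) oddX p_odd orbT.
have d_odd := odd_coprime_predn card_odd hd.
have expd_inj := expfz_inj_coprime hd (odd_gt0 d_odd).
suff : \sum_(a : K) WeilSum p zeta d a * sigma (WeilSum p zeta d a) = 0.
  by rewrite (bigD1 0) //= (WeilSum0 hp hzeta) // mul0r add0r.
under eq_bigr do rewrite (rmorph_WeilSum d hp hzeta _ sigma_zeta).
exact: sum_WeilSum_scale.
Qed.
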